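(* Let $\bar a>0$ and $b>0$ be real constants and consider the system of ordinary differential equations on $\mathbb{R}^3$ \begin{align*} \dot q_1 &= q_1\,[\bar a - 2b q_1 - b q_2 - b q_3],\\ \dot q_2 &= q_2\,[\bar a - b q_1 - 2b q_2 - b q_3],\\ \dot q_3 &= q_3\,[\bar a - b q_1 - b q_2 - 2b q_3]. \end{align*} Let $E_8$ denote the equilibrium of this system all of whose coordinates are strictly positive (the Cournot equilibrium, $E_8=(q^*,q^*,q^* )$ with $q^*=\bar a/(4b)$). Then $E_8$ is a stable node.
   Context: This system models a Cournot triopoly of identical firms with linear inverse demand $p=a-bQ$, $Q=q_1+q_2+q_3$, identical linear cost $C(q_i)=c+dq_i$, $\bar a=a-d$, and gradient (bounded rationality) adjustment with unit speed; $q_i$ is the output of firm $i$. A stable node is a hyperbolic equilibrium whose linearization has only real, strictly negative eigenvalues. *)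

From HB Require Import structures.
From mathcomp Require Import all_boot all_order all_algebra.
From mathcomp Require Import all_classical all_reals.
From mathcomp Require Import topology normedtype derive.
From mathcomp.real_closed Require complex.
Import complex.ComplexEqChoice complex.ComplexField.
Set Implicit Arguments. Unset Strict Implicit. Unset Printing Implicit Defensive.
Import Order.TTheory GRing.Theory Num.Theory.
Import numFieldNormedType.Exports.
Local Open Scope ring_scope.

(* Gradient-adjustment Cournot triopoly vector field on R^3 (row vectors):
   qdot_i = q_i * (abar - b * q_i - b * (q_1 + q_2 + q_3)),
   i.e. qdot_1 = q_1 [abar - 2 b q_1 - b q_2 - b q_3], etc. *)
Definition triopoly_field (R : realType) (abar b : R) (q : 'rV[R]_3) : 'rV[R]_3 :=
  \row_(i < 3) (q ord0 i * (abar - b * q ord0 i - b * \sum_(j < 3) q ord0 j)).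

Definition is_equilibrium (R : realType) (f : 'rV[R]_3 -> 'rV[R]_3) (x : 'rV[R]_3) :=
  f x = 0.

Definition cplx_mx (R : realType) (n : nat) (A : 'M[R]_n) : 'M[complex.complex R]_n :=
  map_mx (fun r : R => complex.Complex r 0) A.

Definition stable_node (R : realType) (f : 'rV[R]_3 -> 'rV[R]_3) (x : 'rV[R]_3) :=
  [/\ is_equilibrium f x, differentiable f x &
      forall z : complex.complex R, eigenvalue (cplx_mx ('J f x)) z ->
        complex.Im z = 0 /\ complex.Re z < 0].

(* At an interior equilibrium every marginal profit abar - b q_i - b Q
   vanishes, so all outputs coincide and equal q* = abar / ((n + 1) b).
   There the Jacobian of the n-firm field is -b q* (I + J), J the all-ones
   matrix: the vector of ones is an eigenvector for -(n + 1) b q*, the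
   sum-zero vectors are eigenvectors for -b q*, and there are no other
   eigenvalues.  The triopoly is the case n = 3. *)

From HB Require Import structures.
From mathcomp Require Import all_boot all_order all_algebra.
From mathcomp Require Import all_classical all_reals.
From mathcomp Require Import topology normedtype derive.
From mathcomp.real_closed Require complex.
From mathcomp Require Import ring lra.
Import complex.ComplexEqChoice complex.ComplexField.
Import Order.TTheory GRing.Theory Num.Theory.
Import numFieldNormedType.Exports.
Local Open Scope ring_scope.

Section RowDifferential.
Context {R : numFieldType} {V : normedModType R}.

Lemma is_diff_sum {W : normedModType R} {n : nat} {f df : 'I_n -> V -> W} {x : V} :
  (forall i, is_diff x (f i) (df i)) ->
  is_diff x (\sum_(i < n) f i) (\sum_(i < n) df i).
Proof. by elim/big_ind2: _ => // *; [exact: is_diff_cst | exact: is_diffD]. Qed.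

Lemma is_diff_coord {m n : nat} (x : 'M[R]_(m, n)) i j :
  is_diff x (fun y : 'M[R]_(m, n) => y i j) (fun y => y i j).
Proof.
have coord_linear : linear (fun y : 'M[R]_(m, n) => y i j).
  by move=> a u w; rewrite !mxE.
pose L : {linear 'M[R]_(m, n) -> R} := HB.pack (fun y : 'M[R]_(m, n) => y i j)
  (GRing.isLinear.Build _ _ _ _ _ coord_linear).
apply: DiffDef; first exact: differentiable_coord.
by rewrite (diff_lin (f := L)) //; exact: coord_continuous.
Qed.

Lemma is_diff_row m (f : V -> 'rV[R]_m) (df : 'I_m -> V -> R) (x : V) :
  (forall j, is_diff x (fun y => f y ord0 j) (df j)) ->
  is_diff x f (fun v => \row_j df j v).
Proof.
move=> is_diff_f.
have -> : f = \sum_(j < m) (fun y => f y ord0 j *: delta_mx ord0 j).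
  by apply/funext => y; rewrite fct_sumE -row_sum_delta.
have -> : (fun v => \row_j df j v) = \sum_(j < m) (fun v => df j v *: delta_mx ord0 j).
  apply/funext => v; rewrite fct_sumE [LHS]row_sum_delta.
  by apply: eq_bigr => j _; rewrite mxE.
apply: is_diff_sum => j; apply: DiffDef; first exact: differentiableZl.
by rewrite diffZl // diff_val.
Qed.

End RowDifferential.

Section CournotOligopoly.
Context {R : realFieldType} (n : nat) (abar b : R).

Definition marginal_profit (q : 'rV[R]_n) (i : 'I_n) : R :=
  abar - b * q ord0 i - b * \sum_(j < n) q ord0 j.

Definition cournot_field (q : 'rV[R]_n) : 'rV[R]_n :=
  \row_(i < n) (q ord0 i * marginal_profit q i).

Definition cournot_output : R := abar / (n.+1%:R * b).

Lemma marginal_profit_const m i :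
  marginal_profit (const_mx m) i = abar - n.+1%:R * b * m.
Proof.
rewrite /marginal_profit mxE; under eq_bigr do rewrite mxE.
by rewrite sumr_const card_ord -mulr_natr mulrSr; ring.
Qed.

Hypothesis b_neq0 : b != 0.

Let n1b_neq0 : n.+1%:R * b != 0. Proof. by rewrite mulf_neq0 ?pnatr_eq0. Qed.

Lemma marginal_profit_output i : marginal_profit (const_mx cournot_output) i = 0.
Proof. by rewrite marginal_profit_const mulrC divfK ?subrr. Qed.

Lemma cournot_field_output : cournot_field (const_mx cournot_output) = 0.
Proof. by apply/rowP => i; rewrite !mxE marginal_profit_output mulr0. Qed.

Lemma cournot_field_interior_eq0 (q : 'rV[R]_n) :
  (forall i, q ord0 i != 0) -> cournot_field q = 0 -> q = const_mx cournot_output.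
Proof.
move=> q_neq0 /rowP field0; set s := \sum_(j < n) q ord0 j.
set m := (abar - b * s) / b; have mb : m * b = abar - b * s by rewrite divfK.
have qE i : q ord0 i = m.
  move: (field0 i); rewrite !mxE /marginal_profit -/s => /eqP.
  rewrite mulf_eq0 (negbTE (q_neq0 i)) /= => /eqP mp0.
  by apply: (mulIf b_neq0); rewrite mb; lra.
have sE : s = m * n%:R.
  by rewrite mulr_natr -(card_ord n) -sumr_const; apply: eq_bigr => i _; exact: qE.
have -> : q = const_mx m by apply/rowP => i; rewrite mxE; exact: qE.
congr const_mx; apply: (mulIf n1b_neq0); rewrite divfK //.
by rewrite sE in mb; rewrite mulrSr; lra.
Qed.

Lemma is_diff_marginal_profit x i :
  is_diff x (marginal_profit^~ i)
    (fun v => - b * v ord0 i - b * \sum_(j < n) v ord0 j).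
Proof.
have -> : marginal_profit^~ i = cst abar - b *: (fun y : 'rV[R]_n => y ord0 i)
    - b *: \sum_(j < n) (fun y : 'rV[R]_n => y ord0 j).
  by apply/funext => y; rewrite /marginal_profit fct_sumE.
have is_diff_mp := is_diffB
  (is_diffB (is_diff_cst abar x) (is_diffZ b (is_diff_coord x ord0 i)))
  (is_diffZ b (is_diff_sum (fun j => is_diff_coord x ord0 j))).
apply: is_diff_eq is_diff_mp _; apply/funext => v.
by rewrite fct_sumE !fctE sub0r mulNr.
Qed.

Lemma is_diff_cournot_field x :
  is_diff x cournot_field (fun v => \row_i (v ord0 i * marginal_profit x i
    + x ord0 i * (- b * v ord0 i - b * \sum_(j < n) v ord0 j))).
Proof.
apply: is_diff_row => i.
have -> : (fun y => cournot_field y ord0 i) =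
    (fun y : 'rV[R]_n => y ord0 i) * marginal_profit^~ i.
  by apply/funext => y; rewrite mxE.
apply: is_diff_eq (is_diffM (is_diff_coord x ord0 i) (is_diff_marginal_profit x i)) _.
by apply/funext => v; rewrite addrC mulrC.
Qed.

Lemma jacobian_cournot_output :
  'J cournot_field (const_mx cournot_output) =
  - (b * cournot_output) *: (1%:M + const_mx 1).
Proof.
rewrite /jacobian (diff_val (is_diff_def := is_diff_cournot_field _)).
apply/matrixP => k j.
have sum_delta : \sum_(l < n) (delta_mx ord0 k : 'rV[R]_n) ord0 l = 1.
  rewrite (bigD1 k) //= big1 ?addr0 => [|l /negbTE lk]; rewrite mxE ?lk ?eqxx //.
rewrite !mxE marginal_profit_output sum_delta mulr0 add0r eqxx (eq_sym j k) /=.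
by rewrite mulr1; ring.
Qed.

End CournotOligopoly.

Lemma eigenvalue_scale_id_add_ones (F : fieldType) (n : nat) (r z : F) :
  eigenvalue (r *: (1%:M + const_mx 1) : 'M[F]_n) z -> z = r \/ z = r * n.+1%:R.
Proof.
case/eigenvalueP => v eigv nz_v; set s := \sum_(k < n) v 0 k.
have v_ones : v *m (const_mx 1 : 'M_n) = const_mx s.
  by apply/rowP => j; rewrite !mxE; apply: eq_bigr => k _; rewrite mxE mulr1.
have eq_j j : (z - r) * v 0 j = r * s.
  move/rowP/(_ j): eigv; rewrite -scalemxAr mulmxDr mulmx1 v_ones !mxE => eigj.
  by rewrite mulrBl -eigj; ring.
have sum_eq : (z - r) * s = r * s * n%:R.
  by rewrite mulr_sumr (eq_bigr _ (fun j _ => eq_j j)) sumr_const card_ord mulr_natr.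
have [s0 | s_neq0] := eqVneq s 0.
  left; apply/eqP; rewrite -subr_eq0; apply: contraNT nz_v => zr_neq0.
  apply/eqP/rowP => j; rewrite mxE; apply: (mulfI zr_neq0).
  by rewrite eq_j s0 !mulr0.
right; have /(mulIf s_neq0) zr : (z - r) * s = (r * n%:R) * s.
  by rewrite sum_eq mulrAC.
by rewrite -[z](subrK r) zr -addn1 natrD mulrDr mulr1.
Qed.

Lemma cplx_mx_scale_id_add_ones (R : realType) n (r : R) :
  cplx_mx (r *: (1%:M + const_mx 1) : 'M_n) =
  complex.real_complex R r *: (1%:M + const_mx 1).
Proof.
apply/matrixP => i j; rewrite !mxE -[complex.Complex _ 0]/(complex.real_complex R _).
by rewrite rmorphM rmorphD rmorphMn rmorph1.
Qed.

Lemma eigenvalue_cplx_scale_id_add_ones (R : realType) n (r : R) z : r < 0 ->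
  eigenvalue (cplx_mx (r *: (1%:M + const_mx 1) : 'M_n)) z ->
  complex.Im z = 0 /\ complex.Re z < 0.
Proof.
move=> r_lt0; rewrite cplx_mx_scale_id_add_ones.
case/eigenvalue_scale_id_add_ones => ->; first by [].
rewrite -(rmorph_nat (complex.real_complex R)) -rmorphM /=.
by split => //; rewrite pmulr_llt0 ?ltr0n.
Qed.

Theorem theorem1 (R : realType) (abar b : R) (habar : 0 < abar) (hb : 0 < b) :
  (exists x : 'rV[R]_3,
     (forall i, 0 < x ord0 i) /\ is_equilibrium (triopoly_field abar b) x) /\
  (forall x : 'rV[R]_3,
     (forall i, 0 < x ord0 i) -> is_equilibrium (triopoly_field abar b) x ->
     x = const_mx (abar / (4 * b)) /\ stable_node (triopoly_field abar b) x).
Proof.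
have b_neq0 : b != 0 by rewrite gt_eqF.
have -> : triopoly_field abar b = cournot_field 3 abar b by [].
have -> : abar / (4 * b) = cournot_output 3 abar b by [].
have output_gt0 : 0 < cournot_output 3 abar b by rewrite divr_gt0 ?mulr_gt0.
have equilibrium := cournot_field_output 3 abar b b_neq0.
split.
  by exists (const_mx (cournot_output 3 abar b)); split => // i; rewrite mxE.
move=> x x_gt0 /cournot_field_interior_eq0 -> //; last first.
  by move=> i; rewrite gt_eqF.
split => //; split => //.
  by have [] := is_diff_cournot_field 3 abar b (const_mx (cournot_output 3 abar b)).
move=> z; rewrite jacobian_cournot_output //.
by apply: eigenvalue_cplx_scale_id_add_ones; rewrite oppr_lt0 mulr_gt0.
Qed.
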